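(* Let $(X,\leq)$ be a poset and $K$ a field. (1) If $FI(X,K)$ is Lie solvable, then ${\rm dl}_{Lie}(FI(X,K))={\rm dl}^{Lie}(FI(X,K))=\lceil \log_2(l(X)+1)\rceil+1$. (2) If $\mathcal{U}(FI(X,K))$ is solvable and $K\neq\mathbb{F}_2$, then ${\rm dl}(\mathcal{U}(FI(X,K)))=\lceil \log_2(l(X)+1)\rceil+1$.
   Context: $FI(X,K)$ is the finitary incidence algebra: the $K$-vector space of formal sums $\alpha=\sum_{x\leq y}\alpha_{xy}e_{xy}$ ($x,y\in X$, $\alpha_{xy}\in K$) such that for every pair $x<y$ only finitely many $x\leq u<v\leq y$ have $\alpha_{uv}\neq0$, with convolution product $\alpha\beta=\sum_{x\leq y}\big(\sum_{x\leq z\leq y}\alpha_{xz}\beta_{zy}\big)e_{xy}$; $\mathcal{U}(FI(X,K))$ is its group of units. For a unital associative algebra $A$ with $[x,y]=xy-yx$ (and $UV$, $[U,V]$ denoting spans of products, commutators of elements of subspaces $U,V$): $A^{[0]}=A$, $A^{[n+1]}=[A^{[n]},A^{[n]}]$; $A^{(0)}=A$, $A^{(n+1)}=[A^{(n)},A^{(n)}]A$. $A$ is Lie solvable if some $A^{[n]}=\{0\}$, and then ${\rm dl}_{Lie}(A)$ is the minimal such $n$; ${\rm dl}^{Lie}(A)$ is the minimal $n$ with $A^{(n)}=\{0\}$. For a solvable group $G$, ${\rm dl}(G)$ is its derived length (minimal $n$ with $G^{(n)}$ trivial, $G^{(n)}$ the derived series). $l(X)$ is the supremum of $|C|-1$ over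 finite chains $C\subseteq X$. $\mathbb{F}_2$ is the field with two elements; $\lceil t\rceil$ is the ceiling. *)

From HB Require Import structures.
From mathcomp Require Import all_boot all_order all_algebra.
From mathcomp Require Import boolp classical_sets cardinality fsbigop.
Set Implicit Arguments. Unset Strict Implicit. Unset Printing Implicit Defensive.
Import Order.TTheory GRing.Theory.
Local Open Scope classical_set_scope.
Local Open Scope ring_scope.

Section FI.
Context {d : Order.disp_t} (X : porderType d) (K : fieldType).

(* formal sums sum_{x<=y} a_xy e_xy, represented by their coefficient function *)
Definition incfun := X -> X -> K.

Definition incidence (a : incfun) : Prop :=
  forall x y, ~ (x <= y)%O -> a x y = 0.

Definition finitary (a : incfun) : Prop :=
  forall x y, (x < y)%O ->
    finite_set [set p : X * X | [/\ (x <= p.1)%O, (p.1 < p.2)%O, (p.2 <= y)%O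
                                 & a p.1 p.2 != 0]].

Definition FI : set incfun := [set a | incidence a /\ finitary a].

(* convolution product; the sum over [x,y] is finitely supported on FI *)
Definition conv (a b : incfun) : incfun := fun x y =>
  if (x <= y)%O then \sum_(z \in [set z : X | (x <= z)%O /\ (z <= y)%O]) a x z * b z y
  else 0.

Definition zerof : incfun := fun _ _ => 0.
Definition delta : incfun := fun x y => if x == y then 1 else 0.

Definition lie (a b : incfun) : incfun := fun x y => conv a b x y - conv b a x y.

Definition span (S : set incfun) : set incfun :=
  [set a | exists s : seq (K * incfun),
      (forall p, p \in s -> S p.2) /\
      a = (fun x y => \sum_(p <- s) p.1 * p.2 x y)].

Definition brack (U V : set incfun) : set incfun :=
  span [set lie u v | u in U & v in V].
Definition prodsp (U V : set incfun) : set incfun :=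
  span [set conv u v | u in U & v in V].

Fixpoint lie_der (n : nat) : set incfun :=
  if n is m.+1 then brack (lie_der m) (lie_der m) else FI.
Fixpoint lie_der_assoc (n : nat) : set incfun :=
  if n is m.+1 then prodsp (brack (lie_der_assoc m) (lie_der_assoc m)) FI else FI.

Definition lie_solvable : Prop := exists n, lie_der n `<=` [set zerof].

Definition dl_Lie_is (n : nat) : Prop :=
  lie_der n `<=` [set zerof] /\ forall m, lie_der m `<=` [set zerof] -> (n <= m)%N.
Definition dl_Lie_assoc_is (n : nat) : Prop :=
  lie_der_assoc n `<=` [set zerof] /\
  forall m, lie_der_assoc m `<=` [set zerof] -> (n <= m)%N.

Definition is_inv (a b : incfun) : Prop :=
  FI b /\ conv a b = delta /\ conv b a = delta.
Definition units : set incfun := [set a | FI a /\ exists b, is_inv a b].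

Inductive gen (S : set incfun) : incfun -> Prop :=
| gen1 : gen S delta
| genM s g : S s -> gen S g -> gen S (conv s g)
| genV s t g : S s -> is_inv s t -> gen S g -> gen S (conv t g).

Definition gcomms (G : set incfun) : set incfun :=
  [set c | exists g h gi hi, [/\ G g, G h, is_inv g gi, is_inv h hi &
     c = conv (conv gi hi) (conv g h)]].

Fixpoint uder (n : nat) : set incfun :=
  if n is m.+1 then gen (gcomms (uder m)) else units.

Definition units_solvable : Prop := exists n, uder n `<=` [set delta].
Definition dl_units_is (n : nat) : Prop :=
  uder n `<=` [set delta] /\ forall m, uder m `<=` [set delta] -> (n <= m)%N.

End FI.

Definition is_chain {d : Order.disp_t} {X : porderType d} (C : seq X) : Prop :=
  uniq C /\ forall x y, x \in C -> y \in C -> (x <= y)%O || (y <= x)%O.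

(* l(X) = n : the supremum of |C|-1 over finite chains C is the finite number n *)
Definition length_is {d : Order.disp_t} (X : porderType d) (n : nat) : Prop :=
  (exists C : seq X, is_chain C /\ size C = n.+1) /\
  (forall C : seq X, is_chain C -> (size C <= n.+1)%N).

(* ceil(log2 m) for m >= 1: the least e with m <= 2^e *)
Definition ceil_log2 (m : nat) : nat := up_log 2 m.

(* Let J_k be the ideal of functions vanishing at every pair (x, y) whose
   interval [x, y] has length < k. Lengths add along x <= z <= y, so
   J_a J_b <= J_(a+b), and every commutator lies in J_1 because diagonal
   entries commute. Hence the (n+1)-st terms of both Lie derived series lie in
   J_(2^n), and, as two elements of delta + J_k commute modulo J_(2k), the
   (n+1)-st derived subgroup of the unit group lies in delta + J_(2^n).
   Conversely, if [x, y] has length >= 2^n, split a chain at its midpoint m: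
   e_xy = [e_xm, e_my], and the group commutator of delta + p e_xm and
   delta + q e_my is delta + pq e_xy; for the units the induction starts from
   the commutator of the diagonal unit delta + (a - 1) e_xx, a <> 0, 1, with
   delta + e_xy. So the (n+1)-st term is trivial exactly when l(X) < 2^n. *)

From Pilot Require Import Defs.
From mathcomp Require Import all_boot all_order all_algebra.
From mathcomp Require Import boolp classical_sets cardinality fsbigop.
From mathcomp Require Import ring.
Set Implicit Arguments. Unset Strict Implicit. Unset Printing Implicit Defensive.
Import Order.TTheory GRing.Theory.
Local Open Scope classical_set_scope.

Section IntervalLength.
Context {d : Order.disp_t} (X : porderType d).
Implicit Types (x y z : X) (k : nat).

Fixpoint len_ge k x y : Prop :=
  if k is k.+1 then exists2 z, (x < z)%O & len_ge k z y else (x <= y)%O.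

Lemma len_ge_le k x y : len_ge k x y -> (x <= y)%O.
Proof.
elim: k x => [//|k IH] x [z xz /IH zy].
exact: le_trans (ltW xz) zy.
Qed.

Lemma len_ge_lt k x y : (0 < k)%N -> len_ge k x y -> (x < y)%O.
Proof. by case: k => // k _ [z xz /len_ge_le]; apply: lt_le_trans. Qed.

Lemma lt_len_ge1 x y : (x < y)%O -> len_ge 1 x y.
Proof. by move=> xy; exists y => //; apply: lexx. Qed.

Lemma len_gexx k x : len_ge k x x -> k = 0%N.
Proof. by case: k => // k /(len_ge_lt (ltn0Sn k)); rewrite ltxx. Qed.

Lemma le_len_ge_trans k x z y : (x <= z)%O -> len_ge k z y -> len_ge k x y.
Proof.
case: k => [|k] xz; first exact: le_trans.
by case=> w zw wy; exists w => //; apply: le_lt_trans zw.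
Qed.

Lemma len_ge_le_trans k x z y : len_ge k x z -> (z <= y)%O -> len_ge k x y.
Proof.
elim: k x => [|k IH] x; first exact: le_trans.
by case=> w xw wz zy; exists w => //; apply: IH.
Qed.

Lemma len_ge_add a b x z y :
  len_ge a x z -> len_ge b z y -> len_ge (a + b) x y.
Proof.
elim: a x => [|a IH] x; first exact: le_len_ge_trans.
by case=> w xw wz zy; exists w => //; apply: IH zy.
Qed.

Lemma len_ge_split a b x y :
  len_ge (a + b) x y -> exists2 z, len_ge a x z & len_ge b z y.
Proof.
elim: a x => [|a IH] x xy; first by exists x; [exact: lexx | exact: xy].
by case: xy => w xw /IH [z wz zy]; exists z => //; exists w.
Qed.

Lemma len_geW k k' x y : (k <= k')%N -> len_ge k' x y -> len_ge k x y.
Proof.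
move=> /subnKC <- /len_ge_split [z xz /len_ge_le zy].
exact: len_ge_le_trans zy.
Qed.

Lemma len_ge_double n x y : len_ge (2 ^ n.+1) x y ->
  exists m, [/\ len_ge (2 ^ n) x m, len_ge (2 ^ n) m y, (x < m)%O & (m < y)%O].
Proof.
have pos : (0 < 2 ^ n)%N by rewrite expn_gt0.
rewrite expnS mul2n -addnn => /len_ge_split [m xm my].
by exists m; split => //; apply: len_ge_lt pos _.
Qed.

Lemma lt_sorted_is_chain (s : seq X) : sorted <%O s -> is_chain s.
Proof.
rewrite lt_sorted_uniq_le => /andP[uniq_s le_s]; split => // a b aS bS.
have mono := sorted_leq_nth le_trans lexx a le_s.
have Ia : index a s \in [pred n | (n < size s)%N] by rewrite inE index_mem.
have Ib : index b s \in [pred n | (n < size s)%N] by rewrite inE index_mem.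
rewrite -(nth_index a aS) -(nth_index a bS).
case: (leqP (index a s) (index b s)) => [ab|/ltnW ba].
  by rewrite (mono _ _ Ia Ib ab).
by rewrite (mono _ _ Ib Ia ba) orbT.
Qed.

Lemma len_ge_chain k x y : len_ge k x y ->
  exists2 C : seq X, is_chain C & size C = k.+1.
Proof.
move=> xy; suff [s xs <-] : exists2 s, path <%O x s & size s = k.
  by exists (x :: s) => //; apply: lt_sorted_is_chain.
elim: k x xy => [|k IH] x; first by exists [::].
by case=> z xz /IH [s zs <-]; exists (z :: s); rewrite //= xz.
Qed.

Lemma path_len_ge x (s : seq X) : path <%O x s -> len_ge (size s) x (last x s).
Proof.
elim: s x => [|z s IH] x /=; first by move=> _; apply: lexx.
by case/andP=> xz /IH; exists z.
Qed.

Lemma chain_len_ge (C : seq X) k : is_chain C -> size C = k.+1 ->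
  exists x y, len_ge k x y.
Proof.
move=> [uniq_C comp_C] sizeC.
have tot : {in C &, total <=%O} by move=> a b aC bC; apply: comp_C.
have le_s : sorted <=%O (sort <=%O C) by apply: (sort_sorted_in tot); apply/allP.
have : sorted <%O (sort <=%O C) by rewrite lt_sorted_uniq_le sort_uniq uniq_C.
move: sizeC; rewrite -(size_sort <=%O); case: (sort _ C) => [//|x s] /= [<-].
by move=> /path_len_ge xs; exists x, (last x s).
Qed.

Lemma len_ge_length l k x y : length_is X l -> len_ge k x y -> (k <= l)%N.
Proof. by move=> [_ bound] /len_ge_chain [C /bound + sC]; rewrite sC ltnS. Qed.

Lemma length_len_ge l : length_is X l -> exists x y, len_ge l x y.
Proof. by move=> [[C [cC sC]] _]; apply: chain_len_ge cC sC. Qed.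

Lemma length_exists (x0 : X) N : (forall x y, ~ len_ge N x y) ->
  exists l, length_is X l.
Proof.
move=> short.
have bounded (C : seq X) : is_chain C -> (size C <= N)%N.
  case sC: (size C) => [//|k] cC; rewrite ltnNge; apply/negP => Nk.
  by have [x [y /(len_geW Nk)]] := chain_len_ge cC sC; apply: short.
pose P n := `[< exists2 C : seq X, is_chain C & size C = n >].
have P1 : P 1%N.
  apply/asboolP; exists [:: x0] => //; split => // a b.
  by rewrite !inE => /eqP-> /eqP->; rewrite lexx.
have ubP n : P n -> (n <= N)%N by move=> /asboolP [C /bounded + <-].
have [n /asboolP [C cC sC] maxP] := ex_maxnP (ex_intro P 1%N P1) ubP.
have n_gt0 : (0 < n)%N by apply: maxP.
exists n.-1; rewrite /length_is prednK //; split; first by exists C.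
by move=> D cD; apply: maxP; apply/asboolP; exists D.
Qed.

End IntervalLength.

Lemma ceil_log2_least (P : nat -> Prop) l : ~ P 0%N ->
    (forall n, P n.+1 <-> (l < 2 ^ n)%N) ->
  P (ceil_log2 l.+1).+1 /\ forall m, P m -> ((ceil_log2 l.+1).+1 <= m)%N.
Proof.
move=> nP0 PS; split; first by apply/PS; apply: up_logP.
by case=> [/nP0 //|m /PS lm]; rewrite ltnS; apply: up_log_min.
Qed.

Section DerivedLength.
Context {d : Order.disp_t} (X : porderType d) (T : Type).
Variables (S : nat -> set (X -> X -> T)) (t : X -> X -> T).
Hypothesis S0_nontrivial : ~ S 0 `<=` [set t].
Hypothesis S_agree : forall n,
  S n.+1 `<=` [set f | forall x y, ~ len_ge (2 ^ n) x y -> f x y = t x y].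
Hypothesis S_nontrivial : forall n (x y : X),
  len_ge (2 ^ n) x y -> ~ S n.+1 `<=` [set t].

Lemma series_trivialS l n : length_is X l -> S n.+1 `<=` [set t] <-> (l < 2 ^ n)%N.
Proof.
move=> Hl; split=> [Sn_t|l_lt f /S_agree Sf].
  rewrite ltnNge; apply/negP => le_l; have [x [y xy]] := length_len_ge Hl.
  exact: S_nontrivial (len_geW le_l xy) Sn_t.
apply/funext => x; apply/funext => y; apply: Sf => /(len_ge_length Hl).
by rewrite leqNgt l_lt.
Qed.

Lemma series_length_exists (x0 : X) : (exists n, S n `<=` [set t]) ->
  exists l, length_is X l.
Proof.
case=> -[/S0_nontrivial //|n Sn_t]; apply: (length_exists x0 (N := 2 ^ n)).
by move=> x y /S_nontrivial.
Qed.

Lemma series_derived_length l : length_is X l ->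
  S (ceil_log2 l.+1).+1 `<=` [set t] /\
  forall m, S m `<=` [set t] -> ((ceil_log2 l.+1).+1 <= m)%N.
Proof. by move=> Hl; apply: ceil_log2_least => // n; apply: series_trivialS. Qed.

End DerivedLength.

Section Convolution.
Context {d : Order.disp_t} (X : porderType d) (K : fieldType).
Local Open Scope ring_scope.
Local Notation inc := (incfun X K).
Local Notation incidence := (@incidence d X K).
Local Notation FI := (@FI d X K).
Local Notation conv := (@Defs.conv d X K).
Local Notation delta := (@delta d X K).
Implicit Types (f g h : inc) (x y z : X).

Lemma conv_nle f g x y : ~~ (x <= y)%O -> conv f g x y = 0.
Proof. by rewrite /Defs.conv => /negbTE ->. Qed.

Lemma conv_incidence f g : incidence (conv f g).
Proof. by move=> x y /negP; apply: conv_nle. Qed.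

Lemma conv_diag f g x : conv f g x x = f x x * g x x.
Proof.
rewrite /Defs.conv lexx (_ : [set z | _] = [set x]) ?fsbig_set1 //.
apply/seteqP; split=> z /=; last by move->; rewrite lexx.
by move=> [xz zx]; apply/le_anti; rewrite xz zx.
Qed.

Lemma incidence_le f x y : incidence f -> f x y != 0 -> (x <= y)%O.
Proof. by move=> If nz; apply: contraNT nz => /negP /If ->. Qed.

Lemma incidence_mul_neq0 f g x z y : incidence f -> incidence g ->
  f x z * g z y != 0 -> [/\ (x <= z)%O, (z <= y)%O, f x z != 0 & g z y != 0].
Proof.
move=> If Ig; rewrite mulf_eq0 negb_or => /andP[fz gz].
by split; [apply: incidence_le fz | apply: incidence_le gz | |].
Qed.

Lemma conv_fsbig (A : set X) f g x y : incidence f -> incidence g ->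
    (forall z, f x z * g z y != 0 -> A z) ->
  conv f g x y = \sum_(z \in A) f x z * g z y.
Proof.
move=> If Ig suppA; set B := [set z | f x z * g z y != 0].
have B0 z : ~ B z -> f x z * g z y = 0 by move=> /negP; rewrite negbK => /eqP.
have B_itv z : B z -> (x <= z)%O /\ (z <= y)%O.
  by move=> /(incidence_mul_neq0 If Ig) [].
rewrite -(fsbig_widen B A) => [|z /suppA //|z [_ /B0 //]].
rewrite /Defs.conv; case: ifPn => xy.
  by apply/esym/fsbig_widen => [z /B_itv //|z [_ /B0]].
by rewrite fsbig1 // => z /B_itv [xz /(le_trans xz)]; rewrite (negbTE xy).
Qed.

Lemma FI_delta : FI delta.
Proof.
split=> [x y|x y _]; rewrite /delta.
  by case: eqP => // -> /(_ (lexx y)).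
apply: sub_finite_set (finite_set0 _) => -[u v] /= [_ uv _].
by rewrite (lt_eqF uv) eqxx.
Qed.

Lemma conv_delta_l g : incidence g -> conv delta g = g.
Proof.
move=> Ig; apply/funext => x; apply/funext => y.
have [Id _] := FI_delta.
rewrite (conv_fsbig (A := [set x]) Id Ig) ?fsbig_set1 /delta ?eqxx ?mul1r //.
by move=> z; case: (x =P z) => [<- //|_]; rewrite mul0r eqxx.
Qed.

Lemma conv_delta_r g : incidence g -> conv g delta = g.
Proof.
move=> Ig; apply/funext => x; apply/funext => y.
have [Id _] := FI_delta.
rewrite (conv_fsbig (A := [set y]) Ig Id) ?fsbig_set1 /delta ?eqxx ?mulr1 //.
by move=> z; case: (z =P y) => [->//|_]; rewrite mulr0 eqxx.
Qed.

Definition row_supp f x y := [set z | [/\ (x <= z)%O, (z <= y)%O & f x z != 0]].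
Definition col_supp f x y := [set z | [/\ (x <= z)%O, (z <= y)%O & f z y != 0]].

Definition supp_pairs f x y := [set p : X * X |
  [/\ (x <= p.1)%O, (p.1 < p.2)%O, (p.2 <= y)%O & f p.1 p.2 != 0]].

Lemma row_supp_finite f x y : FI f -> finite_set (row_supp f x y).
Proof.
move=> [_ fin]; have [xy|nxy] := boolP (x < y)%O.
  apply: (@sub_finite_set _ _ ([set x] `|` snd @` supp_pairs f x y)).
    move=> z [xz zy fz]; have [->|zx] := eqVneq z x; [by left | right].
    by exists (x, z) => //; split; rewrite //= lt_def zx.
  by rewrite finite_setU; split; [apply: finite_set1 | apply/finite_image/fin].
apply: sub_finite_set (finite_set1 x) => z [xz zy _] /=; apply/eqP.
by apply: contraNT nxy => zx; rewrite (lt_le_trans _ zy) // lt_def zx.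
Qed.

Lemma col_supp_finite f x y : FI f -> finite_set (col_supp f x y).
Proof.
move=> [_ fin]; have [xy|nxy] := boolP (x < y)%O.
  apply: (@sub_finite_set _ _ ([set y] `|` fst @` supp_pairs f x y)).
    move=> z [xz zy fz]; have [->|zy'] := eqVneq z y; [by left | right].
    by exists (z, y) => //; split; rewrite //= lt_def eq_sym zy'.
  by rewrite finite_setU; split; [apply: finite_set1 | apply/finite_image/fin].
apply: sub_finite_set (finite_set1 y) => z [xz zy _] /=; apply/eqP.
by apply: contraNT nxy => zy'; rewrite (le_lt_trans xz) // lt_def eq_sym zy'.
Qed.

Lemma conv_neq0 f g x y : conv f g x y != 0 ->
  exists w, f x w != 0 /\ g w y != 0.
Proof.
rewrite /Defs.conv; case: ifP => _; last by rewrite eqxx.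
move=> /(@fsbigN1 _ _ _ unit _ _ (fun _ w => f x w * g w y) tt) [w _].
by rewrite mulf_eq0 negb_or => /andP; exists w.
Qed.

Lemma FI_conv f g : FI f -> FI g -> FI (conv f g).
Proof.
move=> [If Ff] [Ig Fg]; split=> [|x y xy]; first exact: conv_incidence.
pose F := supp_pairs f x y; pose G := supp_pairs g x y.
apply: (@sub_finite_set _ _ (F `|` G `|` [set (p.1, q.2) | p in F & q in G])).
  move=> [u v] /= [xu uv vy /conv_neq0 [w [fw gw]]].
  have uw := incidence_le If fw; have wv := incidence_le Ig gw.
  have [uw_eq|nuw] := eqVneq u w; first by left; right; split; rewrite // uw_eq.
  have [wv_eq|nwv] := eqVneq w v; first by left; left; split; rewrite // -wv_eq.
  right; exists (u, w).
    by split; rewrite //= ?lt_def 1?eq_sym ?nuw ?(le_trans wv).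
  by exists (w, v) => //; split; rewrite //= ?lt_def 1?eq_sym ?nwv ?(le_trans xu).
rewrite !finite_setU; split; [split|apply: finite_image2].
all: by [apply: Ff | apply: Fg].
Qed.

Lemma conv_assoc f g h : FI f -> FI g -> FI h ->
  conv (conv f g) h = conv f (conv g h).
Proof.
move=> Ff Fg Fh; have [If _] := Ff; have [Ig _] := Fg; have [Ih _] := Fh.
apply/funext => x; apply/funext => y.
pose W := row_supp f x y; pose Z := col_supp h x y.
have -> : conv (conv f g) h x y =
    \sum_(z \in Z) \sum_(w \in W) f x w * g w z * h z y.
  rewrite (conv_fsbig (A := Z) (conv_incidence f g) Ih); last first.
    by move=> z /(incidence_mul_neq0 (conv_incidence f g) Ih) [].
  apply: eq_fsbigr => z /set_mem [xz zy _].
  rewrite (conv_fsbig (A := W) If Ig) ?mulr_fsuml // => w.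
  move=> /(incidence_mul_neq0 If Ig) [xw wz fw _].
  by split; rewrite // (le_trans wz zy).
have -> : conv f (conv g h) x y =
    \sum_(w \in W) \sum_(z \in Z) f x w * g w z * h z y.
  rewrite (conv_fsbig (A := W) If (conv_incidence g h)); last first.
    by move=> w /(incidence_mul_neq0 If (conv_incidence g h)) [].
  apply: eq_fsbigr => w /set_mem [xw wy _].
  rewrite (conv_fsbig (A := Z) Ig Ih) ?mulr_fsumr; last first.
    move=> z /(incidence_mul_neq0 Ig Ih) [wz zy _ hz].
    by split; rewrite // (le_trans xw wz).
  by apply: eq_fsbigr => z _; rewrite mulrA.
by rewrite exchange_fsbig //; [apply: col_supp_finite | apply: row_supp_finite].
Qed.

Lemma conv_linear_l f1 f2 c g : FI f1 -> FI f2 -> incidence g ->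
  conv (fun x y => f1 x y + c * f2 x y) g =
  fun x y => conv f1 g x y + c * conv f2 g x y.
Proof.
move=> F1 F2 Ig; have [I1 _] := F1; have [I2 _] := F2.
have I12 : incidence (fun x y => f1 x y + c * f2 x y).
  by move=> x y nxy; rewrite I1 // I2 // mulr0 addr0.
apply/funext => x; apply/funext => y.
pose A := row_supp f1 x y `|` row_supp f2 x y.
have inA (k : inc) : incidence k ->
    (forall z, k x z != 0 -> f1 x z != 0 \/ f2 x z != 0) ->
  forall z, k x z * g z y != 0 -> A z.
  by move=> Ik kf z /(incidence_mul_neq0 Ik Ig) [xz zy /kf [] ? _]; [left|right].
rewrite (conv_fsbig (A := A) I12 Ig); last first.
  apply: inA I12 _ => z; have [->|f1z] := eqVneq (f1 x z) 0; last by left.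
  by rewrite add0r mulf_eq0 negb_or => /andP[]; right.
rewrite (conv_fsbig (A := A) I1 Ig); last by apply: inA I1 _ => z; left.
rewrite (conv_fsbig (A := A) I2 Ig); last by apply: inA I2 _ => z; right.
rewrite mulr_fsumr -fsbig_split; last first.
  by rewrite finite_setU; split; apply: row_supp_finite.
by apply: eq_fsbigr => z _; rewrite mulrDl mulrA.
Qed.

Lemma FI_linear f1 f2 c : FI f1 -> FI f2 -> FI (fun x y => f1 x y + c * f2 x y).
Proof.
move=> [I1 F1] [I2 F2]; split=> [x y nxy|x y xy].
  by rewrite I1 // I2 // mulr0 addr0.
apply: (@sub_finite_set _ _ (supp_pairs f1 x y `|` supp_pairs f2 x y)).
  move=> p [xp p12 py]; have [f1p|f1p] := eqVneq (f1 p.1 p.2) 0; last by left.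
  by rewrite f1p add0r mulf_eq0 negb_or => /andP[_ f2p]; right.
by rewrite finite_setU; split; [apply: F1 | apply: F2].
Qed.

Lemma eq_conv_l f f' g x y :
    (forall z, (x <= z)%O -> (z <= y)%O -> f x z = f' x z) ->
  conv f g x y = conv f' g x y.
Proof.
move=> eq_f; rewrite /Defs.conv; case: ifP => // _.
by apply: eq_fsbigr => z /set_mem [xz zy]; rewrite eq_f.
Qed.

Lemma eq_conv_r f g g' x y :
    (forall z, (x <= z)%O -> (z <= y)%O -> g z y = g' z y) ->
  conv f g x y = conv f g' x y.
Proof.
move=> eq_g; rewrite /Defs.conv; case: ifP => // _.
by apply: eq_fsbigr => z /set_mem [xz zy]; rewrite eq_g.
Qed.

End Convolution.

Section LieSeries.
Context {d : Order.disp_t} (X : porderType d) (K : fieldType).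
Local Open Scope ring_scope.
Local Notation inc := (incfun X K).
Local Notation incidence := (@incidence d X K).
Local Notation FI := (@FI d X K).
Local Notation conv := (@Defs.conv d X K).
Local Notation lie := (@Defs.lie d X K).
Local Notation span := (@Defs.span d X K).
Local Notation brack := (@brack d X K).
Local Notation prodsp := (@prodsp d X K).
Local Notation zerof := (@zerof d X K).
Local Notation lie_der := (@lie_der d X K).
Local Notation lie_der_assoc := (@lie_der_assoc d X K).
Implicit Types (f g : inc) (S U V : set inc) (x y z : X).

Definition zero_below k : set inc := [set f | forall x y, ~ len_ge k x y -> f x y = 0].

Lemma FI_zero_below0 : FI `<=` zero_below 0.
Proof. by move=> f [If _]. Qed.

Lemma zero_below_conv a b f g :
  zero_below a f -> zero_below b g -> zero_below (a + b) (conv f g).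
Proof.
move=> Hf Hg x y nxy; rewrite /Defs.conv; case: ifP => // _; apply: fsbig1 => z _.
have [xz|/Hf->] := pselect (len_ge a x z); last by rewrite mul0r.
have [zy|/Hg->] := pselect (len_ge b z y); last by rewrite mulr0.
by case: nxy; apply: len_ge_add xz zy.
Qed.

Lemma zero_below_lie a b f g :
  zero_below a f -> zero_below b g -> zero_below (a + b) (lie f g).
Proof.
move=> Hf Hg x y nxy; rewrite /Defs.lie (zero_below_conv Hf Hg) //.
by rewrite (zero_below_conv Hg Hf) ?subr0 // addnC.
Qed.

Lemma zero_below1_lie f g : zero_below 1 (lie f g).
Proof.
move=> x y nxy; rewrite /Defs.lie.
have [<-|neq] := eqVneq x y; first by rewrite !conv_diag mulrC subrr.
have nle : ~~ (x <= y)%O.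
  by apply: contra_notN nxy => xy; apply: lt_len_ge1; rewrite lt_neqAle neq.
by rewrite !conv_nle ?subr0.
Qed.

Lemma zero_below_span k S : S `<=` zero_below k -> span S `<=` zero_below k.
Proof.
move=> HS _ [s [sS ->]] x y nxy; rewrite big1_seq // => p /andP[_ /sS /HS Hp].
by rewrite Hp ?mulr0.
Qed.

Lemma zero_below_brack a b U V : U `<=` zero_below a -> V `<=` zero_below b ->
  brack U V `<=` zero_below (a + b).
Proof.
move=> HU HV; apply: zero_below_span => _ [u /HU Hu [v /HV Hv <-]].
exact: zero_below_lie.
Qed.

Lemma zero_below1_brack U V : brack U V `<=` zero_below 1.
Proof. by apply: zero_below_span => _ [u _ [v _ <-]]; apply: zero_below1_lie. Qed.

Lemma zero_below_prodsp a b U V : U `<=` zero_below a -> V `<=` zero_below b ->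
  prodsp U V `<=` zero_below (a + b).
Proof.
move=> HU HV; apply: zero_below_span => _ [u /HU Hu [v /HV Hv <-]].
exact: zero_below_conv.
Qed.

Lemma lie_der_zero_below n : lie_der n.+1 `<=` zero_below (2 ^ n).
Proof.
elim: n => [|n IH]; first exact: zero_below1_brack.
by rewrite expnS mul2n -addnn; apply: zero_below_brack.
Qed.

Lemma lie_der_assoc_zero_below n : lie_der_assoc n.+1 `<=` zero_below (2 ^ n).
Proof.
elim: n => [|n IH]; rewrite -[(2 ^ _)%N]addn0; apply: zero_below_prodsp FI_zero_below0.
  exact: zero_below1_brack.
by rewrite expnS mul2n -addnn; apply: zero_below_brack.
Qed.

Definition emx a b : inc := fun x y => ((x == a) && (y == b))%:R.

Lemma emx_neq0 x y : emx x y <> zerof.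
Proof.
move=> /(congr1 (fun f => f x y)); rewrite /emx /Defs.zerof !eqxx /=.
by move/eqP; rewrite oner_eq0.
Qed.

Lemma FI_emx a b : (a <= b)%O -> FI (emx a b).
Proof.
move=> ab; split=> [x y nxy|x y _]; rewrite /emx.
  by case: (x =P a) => [xa|]; case: (y =P b) => [yb|] //; case: nxy; rewrite xa yb.
apply: sub_finite_set (finite_set1 (a, b)) => -[u v] [_ _ _] /=.
by case: (u =P a) => [->|]; case: (v =P b) => [->|]; rewrite //= eqxx.
Qed.

Lemma conv_emx_l a b g : (a <= b)%O -> incidence g ->
  conv (emx a b) g = fun x y => (x == a)%:R * g b y.
Proof.
move=> ab Ig; apply/funext => x; apply/funext => y; have [Iab _] := FI_emx ab.
rewrite (conv_fsbig (A := [set b]) Iab Ig) ?fsbig_set1 /emx ?eqxx ?andbT //.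
by move=> z; case: (z =P b) => [->//|_]; rewrite andbF mul0r eqxx.
Qed.

Lemma lie_emx x m y : (x <= m)%O -> (m <= y)%O -> x != y ->
  lie (emx x m) (emx m y) = emx x y.
Proof.
move=> xm my xy; have [Ixm _] := FI_emx xm; have [Imy _] := FI_emx my.
apply/funext => u; apply/funext => v; rewrite /Defs.lie !conv_emx_l //.
rewrite /emx eqxx [y == x]eq_sym (negbTE xy) /= mulr0 subr0.
by case: (u == x); case: (v == y); rewrite ?mulr1 ?mulr0.
Qed.

Lemma conv_emx_diag x y : (x <= y)%O -> conv (emx x y) (emx y y) = emx x y.
Proof.
move=> xy; have [Iyy _] := FI_emx (lexx y); rewrite conv_emx_l //.
apply/funext => u; apply/funext => v; rewrite /emx eqxx /=.
by case: (u == x); rewrite ?mul1r ?mul0r.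
Qed.

Lemma span1 S f : S f -> span S f.
Proof.
move=> Sf; exists [:: (1, f)]; split; first by move=> p; rewrite inE => /eqP ->.
by apply/funext => x; apply/funext => y; rewrite big_seq1 mul1r.
Qed.

Lemma brack_emx U x m y : U (emx x m) -> U (emx m y) ->
  (x <= m)%O -> (m <= y)%O -> x != y -> brack U U (emx x y).
Proof.
move=> Uxm Umy xm my xy; rewrite -(lie_emx xm my xy); apply: span1.
by exists (emx x m) => //; exists (emx m y).
Qed.

Lemma brack_FI_emx x y : (x < y)%O -> brack FI FI (emx x y).
Proof.
move=> xy; apply: (brack_emx (FI_emx (lexx x)) (FI_emx (ltW xy))).
- exact: lexx.
- exact: ltW.
- by rewrite lt_eqF.
Qed.

Lemma prodsp_emx V x y : V (emx x y) -> (x <= y)%O -> prodsp V FI (emx x y).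
Proof.
move=> Vxy xy; rewrite -conv_emx_diag //; apply: span1.
by exists (emx x y) => //; exists (emx y y) => //; apply: FI_emx.
Qed.

Lemma lie_der_emx n x y : len_ge (2 ^ n) x y -> lie_der n.+1 (emx x y).
Proof.
elim: n x y => [|n IH] x y.
  by move=> /(len_ge_lt (ltn0Sn 0)); apply: brack_FI_emx.
case/len_ge_double => m [/IH xm /IH my lxm lmy].
by apply: brack_emx xm my (ltW lxm) (ltW lmy) _; rewrite lt_eqF // (lt_trans lxm lmy).
Qed.

Lemma lie_der_assoc_emx n x y : len_ge (2 ^ n) x y -> lie_der_assoc n.+1 (emx x y).
Proof.
elim: n x y => [|n IH] x y.
  by move=> /(len_ge_lt (ltn0Sn 0)) xy; apply: prodsp_emx (ltW xy); apply: brack_FI_emx.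
case/len_ge_double => m [/IH xm /IH my lxm lmy]; have lxy := lt_trans lxm lmy.
apply: prodsp_emx (ltW lxy).
by apply: brack_emx xm my (ltW lxm) (ltW lmy) _; rewrite lt_eqF.
Qed.

Lemma FI_nontrivial (x0 : X) : ~ FI `<=` [set zerof].
Proof. by move=> /(_ _ (FI_emx (lexx x0))); apply: emx_neq0. Qed.

Lemma lie_der_nontrivial n x y : len_ge (2 ^ n) x y -> ~ lie_der n.+1 `<=` [set zerof].
Proof. by move=> /lie_der_emx Lxy /(_ _ Lxy); apply: emx_neq0. Qed.

Lemma lie_der_assoc_nontrivial n x y : len_ge (2 ^ n) x y ->
  ~ lie_der_assoc n.+1 `<=` [set zerof].
Proof. by move=> /lie_der_assoc_emx Lxy /(_ _ Lxy); apply: emx_neq0. Qed.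

End LieSeries.

Section UnitSeries.
Context {d : Order.disp_t} (X : porderType d) (K : fieldType).
Local Open Scope ring_scope.
Local Notation inc := (incfun X K).
Local Notation incidence := (@incidence d X K).
Local Notation FI := (@FI d X K).
Local Notation conv := (@Defs.conv d X K).
Local Notation delta := (@delta d X K).
Local Notation is_inv := (@is_inv d X K).
Local Notation units := (@units d X K).
Local Notation gen := (@gen d X K).
Local Notation uder := (@uder d X K).
Local Notation emx := (@emx d X K).
Implicit Types (f g h gi hi s t : inc) (S : set inc) (x y z : X).

Definition delta_below k : set inc :=
  [set f | forall x y, ~ len_ge k x y -> f x y = delta x y].

Lemma delta_below_diag k f x : (0 < k)%N -> delta_below k f -> f x x = 1.
Proof.
move=> k_gt0 Hf; rewrite Hf /delta ?eqxx // => /len_gexx k0.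
by rewrite k0 in k_gt0.
Qed.

Lemma delta_below_offdiag k f x y : delta_below k f -> x != y -> f x y != 0 ->
  len_ge k x y.
Proof.
move=> Hf xy fxy; have [//|nxy] := pselect (len_ge k x y).
by rewrite Hf // /delta (negbTE xy) eqxx in fxy.
Qed.

Lemma delta_below_conv k f g : incidence g ->
  delta_below k f -> delta_below k g -> delta_below k (conv f g).
Proof.
move=> Ig Hf Hg x y nxy; rewrite (@eq_conv_l _ _ _ _ delta) ?conv_delta_l ?Hg //.
by move=> z xz zy; apply: Hf => /len_ge_le_trans /(_ zy).
Qed.

Lemma delta_below_inv k s t : incidence t -> conv t s = delta ->
  delta_below k s -> delta_below k t.
Proof.
move=> It ts Hs x y nxy; rewrite -ts -{1}[t]conv_delta_r //.
by apply: eq_conv_r => z xz zy; rewrite Hs // => /(le_len_ge_trans xz).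
Qed.

Lemma gen_delta_below k S : S `<=` FI `&` delta_below k ->
  gen S `<=` FI `&` delta_below k.
Proof.
move=> HS g; elim=> [|s {}g Ss _ [Fg Dg]|s t {}g Ss [Ft [_ ts]] _ [Fg Dg]].
- by split; [apply: FI_delta | move=> x y].
- have [Fs Ds] := HS _ Ss.
  by split; [apply: FI_conv | apply: delta_below_conv (proj1 Fg) Ds Dg].
- have [Fs Ds] := HS _ Ss; have Dt := delta_below_inv (proj1 Ft) ts Ds.
  by split; [apply: FI_conv | apply: delta_below_conv (proj1 Fg) Dt Dg].
Qed.

Definition gcomm g h gi hi := conv (conv gi hi) (conv g h).

Lemma FI_gcomm g h gi hi : FI g -> FI h -> is_inv g gi -> is_inv h hi ->
  FI (gcomm g h gi hi).
Proof. by move=> Fg Fh [Fgi _] [Fhi _]; do 2?apply: FI_conv. Qed.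

Lemma inv_diag g gi x : is_inv g gi -> gi x x * g x x = 1.
Proof.
by move=> [_ [_ /(congr1 (fun f => f x x))]]; rewrite conv_diag /delta eqxx.
Qed.

Lemma gcomm_delta_below1 g h gi hi : is_inv g gi -> is_inv h hi ->
  delta_below 1 (gcomm g h gi hi).
Proof.
move=> ig ih x y nxy; rewrite /gcomm; have [<-|neq] := eqVneq x y.
  by rewrite !conv_diag mulrACA (inv_diag x ig) (inv_diag x ih) mulr1 /delta eqxx.
have nle : ~~ (x <= y)%O.
  by apply: contra_notN nxy => xy; apply: lt_len_ge1; rewrite lt_neqAle neq.
by rewrite conv_nle // /delta (negbTE neq).
Qed.

Lemma conv_delta_below_offdiag k g h x y : (0 < k)%N -> incidence g -> incidence h ->
    delta_below k g -> delta_below k h -> x != y -> ~ len_ge (k + k) x y ->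
  conv g h x y = g x y + h x y.
Proof.
move=> k_gt0 Ig Ih Hg Hh xy nxy.
rewrite (conv_fsbig (A := [set x] `|` [set y]) Ig Ih).
  rewrite fsbigU0 ?fsbig_set1; try exact: finite_set1; last first.
    by move=> z [/= -> zy]; rewrite zy eqxx in xy.
  by rewrite !(delta_below_diag _ k_gt0) // mul1r mulr1 addrC.
move=> z; rewrite mulf_eq0 negb_or => /andP[gz hz].
have [->|zx] := eqVneq z x; first by left.
have [->|zy] := eqVneq z y; first by right.
rewrite eq_sym in zx; case: nxy.
exact: len_ge_add (delta_below_offdiag Hg zx gz) (delta_below_offdiag Hh zy hz).
Qed.

Lemma conv_comm_delta_below k g h x y : (0 < k)%N -> incidence g -> incidence h ->
    delta_below k g -> delta_below k h -> ~ len_ge (k + k) x y ->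
  conv g h x y = conv h g x y.
Proof.
move=> k_gt0 Ig Ih Hg Hh nxy; have [<-|xy] := eqVneq x y.
  by rewrite !conv_diag mulrC.
by rewrite !(conv_delta_below_offdiag k_gt0) // addrC.
Qed.

Lemma gcomm_delta_below k g h gi hi : (0 < k)%N -> FI g -> FI h ->
    delta_below k g -> delta_below k h -> is_inv g gi -> is_inv h hi ->
  delta_below (k + k) (gcomm g h gi hi).
Proof.
move=> k_gt0 Fg Fh Hg Hh [Fgi [_ gig]] [Fhi [_ hih]] x y nxy.
have -> : delta = conv (conv gi hi) (conv h g).
  rewrite (conv_assoc Fgi Fhi (FI_conv Fh Fg)) -(conv_assoc Fhi Fh Fg) hih.
  by rewrite conv_delta_l ?gig //; case: Fg.
apply: eq_conv_r => z xz zy; apply: (conv_comm_delta_below k_gt0) => //.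
- by case: Fg.
- by case: Fh.
- by move/(le_len_ge_trans xz).
Qed.

Lemma uder_delta_below n : uder n.+1 `<=` FI `&` delta_below (2 ^ n).
Proof.
elim: n => [|n IH]; apply: gen_delta_below => _ [g [h [gi [hi [Ug Uh ig ih ->]]]]].
  by split; [apply: FI_gcomm; [case: Ug | case: Uh | |] | apply: gcomm_delta_below1].
have [Fg Dg] := IH _ Ug; have [Fh Dh] := IH _ Uh.
split; first exact: FI_gcomm.
by rewrite expnS mul2n -addnn; apply: gcomm_delta_below; rewrite ?expn_gt0.
Qed.

Definition elem c a b : inc := fun x y => delta x y + c * emx a b x y.

Lemma FI_elem c a b : (a <= b)%O -> FI (elem c a b).
Proof. by move=> ab; apply: FI_linear; [apply: FI_delta | apply: FI_emx]. Qed.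

Lemma conv_elem_l c a b g : (a <= b)%O -> incidence g ->
  conv (elem c a b) g = fun x y => g x y + c * ((x == a)%:R * g b y).
Proof.
move=> ab Ig; rewrite conv_linear_l ?conv_delta_l ?conv_emx_l //.
  exact: FI_delta.
exact: FI_emx.
Qed.

Local Ltac expand_elem :=
  apply/funext => u; apply/funext => v; rewrite /elem /emx /delta;
  repeat (case: eqP => [?|?]; subst; try congruence); rewrite /=.

Lemma is_inv_elem p a b : (a <= b)%O -> a != b -> is_inv (elem p a b) (elem (-p) a b).
Proof.
move=> ab /eqP nab; have [I1 _] := FI_elem (-p) ab; have [I2 _] := FI_elem p ab.
split; first exact: FI_elem.
by split; rewrite (conv_elem_l _ ab) //; expand_elem; ring.
Qed.

Lemma is_inv_elem_diag a x : a != 0 -> is_inv (elem (a - 1) x x) (elem (a^-1 - 1) x x).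
Proof.
move=> a0; have [I1 _] := FI_elem (a^-1 - 1) (lexx x).
have [I2 _] := FI_elem (a - 1) (lexx x).
split; first exact: FI_elem.
by split; rewrite (conv_elem_l _ (lexx x)) //; expand_elem; field.
Qed.

Lemma gcomm_elem p q x m y : (x <= m)%O -> (m <= y)%O -> x != m -> m != y -> x != y ->
  gcomm (elem p x m) (elem q m y) (elem (-p) x m) (elem (-q) m y) = elem (p * q) x y.
Proof.
move=> xm my /eqP nxm /eqP nmy /eqP nxy.
rewrite /gcomm (conv_assoc (FI_elem _ xm) (FI_elem _ my)); last first.
  by apply: FI_conv; apply: FI_elem.
rewrite (conv_elem_l _ xm (conv_incidence _ _)) (conv_elem_l _ my (conv_incidence _ _)).
rewrite (conv_elem_l _ xm (proj1 (FI_elem q my))).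
by expand_elem; ring.
Qed.

Lemma gcomm_elem_diag a x y : a != 0 -> (x <= y)%O -> x != y ->
  gcomm (elem (a - 1) x x) (elem 1 x y) (elem (a^-1 - 1) x x) (elem (-1) x y)
  = elem (1 - a^-1) x y.
Proof.
move=> a0 xy /eqP nxy.
rewrite /gcomm (conv_assoc (FI_elem _ (lexx x)) (FI_elem _ xy)); last first.
  by apply: FI_conv; apply: FI_elem.
rewrite (conv_elem_l _ (lexx x) (conv_incidence _ _)).
rewrite (conv_elem_l _ xy (conv_incidence _ _)).
rewrite (conv_elem_l _ (lexx x) (proj1 (FI_elem 1 xy))).
by expand_elem; field.
Qed.

Lemma elem_neq_delta k x y : k != 0 -> x != y -> elem k x y <> delta.
Proof.
move=> k0 xy /(congr1 (fun f => f x y)) /eqP.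
by rewrite /elem /emx /delta (negbTE xy) !eqxx mulr1 add0r (negbTE k0).
Qed.

Lemma elem_diag_neq_delta a x : a != 1 -> elem (a - 1) x x <> delta.
Proof.
move=> a1 /(congr1 (fun f => f x x)) /eqP.
by rewrite /elem /emx /delta !eqxx mulr1 addrC subrK (negbTE a1).
Qed.

Lemma units_elem p a b : (a <= b)%O -> a != b -> units (elem p a b).
Proof.
by move=> ab nab; split; [apply: FI_elem | exists (elem (-p) a b); apply: is_inv_elem].
Qed.

Lemma units_elem_diag a x : a != 0 -> units (elem (a - 1) x x).
Proof.
move=> a0; split; first exact/FI_elem/lexx.
by exists (elem (a^-1 - 1) x x); apply: is_inv_elem_diag.
Qed.

Lemma uder_gcomm n g h gi hi : uder n g -> uder n h -> is_inv g gi -> is_inv h hi ->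
  uder n.+1 (gcomm g h gi hi).
Proof.
move=> Ug Uh ig ih; rewrite -[gcomm _ _ _ _]conv_delta_r; last exact: conv_incidence.
by apply: genM (gen1 _); exists g, h, gi, hi.
Qed.

Lemma uder_elem (a : K) : a != 0 -> a != 1 -> forall n x y, len_ge (2 ^ n) x y ->
  exists2 k, k != 0 & uder n.+1 (elem k x y).
Proof.
move=> a0 a1; elim=> [|n IH] x y.
  move=> /(len_ge_lt (ltn0Sn 0)) xy; have nxy : x != y by rewrite lt_eqF.
  exists (1 - a^-1); first by rewrite subr_eq0 eq_sym invr_eq1.
  rewrite -gcomm_elem_diag ?ltW //; apply: uder_gcomm.
  - exact: units_elem_diag.
  - exact: units_elem (ltW xy) nxy.
  - exact: is_inv_elem_diag.
  - exact: is_inv_elem (ltW xy) nxy.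
case/len_ge_double => m [/IH [k1 k1_neq0 U1] /IH [k2 k2_neq0 U2] xm my].
have [nxm nmy] : x != m /\ m != y by rewrite !lt_eqF.
have nxy : x != y by rewrite lt_eqF // (lt_trans xm my).
exists (k1 * k2); first by rewrite mulf_neq0.
rewrite -(gcomm_elem _ _ (ltW xm) (ltW my) nxm nmy nxy).
by apply: uder_gcomm U1 U2 _ _; apply: is_inv_elem; rewrite ?ltW.
Qed.

Lemma units_nontrivial (a : K) (x0 : X) : a != 0 -> a != 1 -> ~ units `<=` [set delta].
Proof.
by move=> a0 a1 /(_ _ (units_elem_diag x0 a0)); apply: elem_diag_neq_delta.
Qed.

Lemma uder_nontrivial (a : K) n x y : a != 0 -> a != 1 -> len_ge (2 ^ n) x y ->
  ~ uder n.+1 `<=` [set delta].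
Proof.
move=> a0 a1 xy; have [k k0 Uk] := uder_elem a0 a1 xy.
move=> /(_ _ Uk); apply: elem_neq_delta k0 _.
by rewrite lt_eqF // (len_ge_lt _ xy) // expn_gt0.
Qed.

End UnitSeries.

Theorem corollary1p5 (d : Order.disp_t) (X : porderType d) (K : fieldType)
    (x0 : X) :
  (lie_solvable X K ->
     exists l : nat, length_is X l /\
       dl_Lie_is X K (ceil_log2 l.+1).+1 /\
       dl_Lie_assoc_is X K (ceil_log2 l.+1).+1) /\
  (units_solvable X K -> (exists a : K, a != 0%R /\ a != 1%R) ->
     exists l : nat, length_is X l /\
       dl_units_is X K (ceil_log2 l.+1).+1).
Proof.
split=> [solvable_lie | solvable_units [a [a0 a1]]].
  have FI0 := FI_nontrivial (K := K) x0.
  have [l Hl] := series_length_exists FI0 (@lie_der_nontrivial _ X K) x0 solvable_lie.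
  exists l; split=> //; split; apply: series_derived_length Hl => //.
  - exact: lie_der_zero_below.
  - exact: lie_der_nontrivial.
  - exact: lie_der_assoc_zero_below.
  - exact: lie_der_assoc_nontrivial.
have U0 := units_nontrivial x0 a0 a1.
have Un n x y := @uder_nontrivial _ X K a n x y a0 a1.
have [l Hl] := series_length_exists U0 Un x0 solvable_units.
exists l; split=> //; apply: series_derived_length Hl => //.
by move=> n f /uder_delta_below [].
Qed.
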